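(* Let $X_n\in L_G^{1^*}(\Omega)$ with $X_n\ge Y$ for all $n\ge1$, where $Y\in\mathbb{L}^1(\Omega)$. Then $\liminf_{n\to\infty}X_n\in\mathcal{L}_G^{1^*_*}(\Omega)$.
   Context: $\Omega=C_0^d(\mathbb{R}^+)$ is the space of continuous paths $\omega:[0,\infty)\to\mathbb{R}^d$ with $\omega_0=0$, $B$ the canonical process, $\hat{\mathbb{E}}$ the $G$-expectation ($G$ a monotone sublinear function on $d\times d$ symmetric matrices). $L^1_G(\Omega)$ is the completion of bounded Lipschitz cylinder functions $\varphi(B_{t_1},\dots,B_{t_n})$ under $\hat{\mathbb{E}}[|\cdot|]$. $\mathcal{P}$ is a weakly compact set of probability measures representing $\hat{\mathbb{E}}$, $\hat{\mathbb{E}}[X]=\sup_{P\in\mathcal{P}}E_P[X]$ for Borel $X$, $c(A)=\sup_{P\in\mathcal{P}}P(A)$, q.s. = outside a capacity-zero set. $L^0(\Omega)$ is the set of Borel maps $\Omega\to[-\infty,\infty]$; $\mathbb{L}^1(\Omega)=\{X\in L^0(\Omega):\hat{\mathbb{E}}[|X|]<\infty\}$; $L_G^{1^*}(\Omega)=\{X\in\mathbb{L}^1(\Omega):\exists X_n\in L^1_G(\Omega),X_n\downarrow X\text{ q.s.}\}$; $\mathcal{L}_G^{1^*_*}(\Omega)=\{X\in L^0(\Omega):\exists X_n\in L_G^{1^*}(\Omega),X_n\uparrow X\text{ q.s.}\}$. *)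

From HB Require Import structures.
From mathcomp Require Import all_boot all_order all_algebra.
From mathcomp Require Import all_classical all_reals all_analysis.
From mathcomp Require Import measurable_realfun.
Set Implicit Arguments. Unset Strict Implicit. Unset Printing Implicit Defensive.
Import Order.TTheory GRing.Theory Num.Theory.
Import numFieldNormedType.Exports.
Local Open Scope classical_set_scope.
Local Open Scope ring_scope.


(* Omega = C_0^d(R^+): continuous paths w : [0,oo) -> R^d with w_0 = 0,
   encoded as continuous w : R -> R^d (row vectors) that vanish on (-oo,0]
   (a bijective encoding: extend every path by 0 on negative times). *)
Record Omega (R : realType) (d : nat) := MkPath {
  pval : R -> 'rV[R]_d ;
  pcont : continuous pval ;
  pneg : forall t : R, t <= 0 -> pval t = 0 }.

Definition zero_path (R : realType) (d : nat) : Omega R d :=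
  @MkPath R d (fun _ => 0) (fun x => @cst_continuous R 'rV[R]_d 0 x) (fun _ _ => erefl).

HB.instance Definition _ (R : realType) (d : nat) := gen_eqMixin (Omega R d).
HB.instance Definition _ (R : realType) (d : nat) := gen_choiceMixin (Omega R d).
HB.instance Definition _ (R : realType) (d : nat) := isPointed.Build (Omega R d) (zero_path R d).

Definition Omega_open (R : realType) (d : nat) (A : set (Omega R d)) : Prop :=
  forall w, A w -> exists N : R, exists e : R, 0 < e /\
    forall w' : Omega R d,
      (forall t : R, 0 <= t <= N -> `|pval w' t - pval w t| <= e) -> A w'.

Notation OmegaB R d := (g_sigma_algebraType (@Omega_open R d)).

Definition Omega_continuous (R : realType) (d : nat) (f : OmegaB R d -> R) : Prop :=
  forall (w : Omega R d) (eps : R), 0 < eps -> exists N : R, exists del : R, 0 < del /\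
    forall w' : Omega R d,
      (forall t : R, 0 <= t <= N -> `|pval w' t - pval w t| <= del) ->
      `|f w' - f w| < eps.

Local Open Scope ereal_scope.

Definition weak_cvg (R : realType) (d : nat) (Pn : nat -> probability (OmegaB R d) R)
    (P : probability (OmegaB R d) R) : Prop :=
  forall f : OmegaB R d -> R,
    (exists M : R, forall w, (`|f w| <= M)%R) -> Omega_continuous f ->
    (\int[Pn n]_w (f w)%:E) @[n --> \oo] --> \int[P]_w (f w)%:E.

Definition weakly_compact (R : realType) (d : nat) (Pset : set (probability (OmegaB R d) R)) : Prop :=
  forall Pn : nat -> probability (OmegaB R d) R, (forall n, Pset (Pn n)) ->
    exists phi : nat -> nat, {homo phi : m n / (m < n)%N >-> (m < n)%N} /\
    exists P, Pset P /\ weak_cvg (Pn \o phi) P.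

Definition Ehat (R : realType) (d : nat) (Pset : set (probability (OmegaB R d) R))
    (X : OmegaB R d -> \bar R) : \bar R :=
  ereal_sup [set \int[P]_w X w | P in Pset].

Definition cap (R : realType) (d : nat) (Pset : set (probability (OmegaB R d) R))
    (A : set (OmegaB R d)) : \bar R :=
  ereal_sup [set P A | P in Pset].

Definition qs (R : realType) (d : nat) (Pset : set (probability (OmegaB R d) R))
    (Pr : OmegaB R d -> Prop) : Prop :=
  exists A : set (OmegaB R d), measurable A /\ cap Pset A = 0 /\
    forall w, ~ A w -> Pr w.

Definition is_cylinder (R : realType) (d : nat) (f : OmegaB R d -> \bar R) : Prop :=
  exists n : nat, exists t : 'I_n -> R, exists phi : 'M[R]_(n, d) -> R,
    (forall i, (0 <= t i)%R) /\
    (exists M : R, forall x, (`|phi x| <= M)%R) /\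
    (exists L : R, forall x y, (`|phi x - phi y| <= L * `|x - y|)%R) /\
    f = (fun w : OmegaB R d => (phi (\matrix_(i < n, j < d) pval w (t i) 0 j))%:E).

Definition L0 (R : realType) (d : nat) (X : OmegaB R d -> \bar R) : Prop :=
  measurable_fun setT X.

Definition LL1 (R : realType) (d : nat) (Pset : set (probability (OmegaB R d) R))
    (X : OmegaB R d -> \bar R) : Prop :=
  L0 X /\ Ehat Pset (fun w => `|X w|) < +oo.

(* L^1_G(Omega): the E^[|.|]-completion of the cylinder functions, realised
   as the Borel maps that are E^[|.|]-limits of cylinder functions. *)
Definition L1G (R : realType) (d : nat) (Pset : set (probability (OmegaB R d) R))
    (X : OmegaB R d -> \bar R) : Prop :=
  L0 X /\ exists phi : nat -> OmegaB R d -> \bar R,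
    (forall k, is_cylinder (phi k)) /\
    Ehat Pset (fun w => `|X w - phi k w|) @[k --> \oo] --> 0.

Definition L1Gstar (R : realType) (d : nat) (Pset : set (probability (OmegaB R d) R))
    (X : OmegaB R d -> \bar R) : Prop :=
  LL1 Pset X /\ exists Xn : nat -> OmegaB R d -> \bar R,
    (forall n, L1G Pset (Xn n)) /\
    qs Pset (fun w => (forall n, Xn n.+1 w <= Xn n w) /\
                      Xn n w @[n --> \oo] --> X w).

Definition L1Gstarstar (R : realType) (d : nat) (Pset : set (probability (OmegaB R d) R))
    (X : OmegaB R d -> \bar R) : Prop :=
  L0 X /\ exists Xn : nat -> OmegaB R d -> \bar R,
    (forall n, L1Gstar Pset (Xn n)) /\
    qs Pset (fun w => (forall n, Xn n w <= Xn n.+1 w) /\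
                      Xn n w @[n --> \oo] --> X w).

(* The functions Z_n := inf_{k >= n} X_k increase to liminf X_n, so it suffices
   that every Z_n lies in L_G^{1*}.  Being squeezed between Y and X_n, Z_n is in
   \mathbb{L}^1.  If V_k m decreases to X_k quasi-surely with V_k m in L^1_G,
   then W_m := min_{i <= m} V_{n+i} m is a decreasing sequence in L^1_G (L^1_G is
   closed under min because min is 1-Lipschitz and cylinder functions are closed
   under min) and converges to Z_n outside the countable union of the exceptional
   sets. *)
From HB Require Import structures.
From mathcomp Require Import all_boot all_order all_algebra.
From mathcomp Require Import all_classical all_reals all_analysis.
From mathcomp Require Import measurable_realfun.
From mathcomp Require Import lra.
Import Order.TTheory GRing.Theory Num.Theory.
Import numFieldNormedType.Exports.
Set Implicit Arguments. Unset Strict Implicit.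
Local Open Scope classical_set_scope.
Local Open Scope ring_scope.

Section matrix_norm.
Variables (R : realType) (m n : nat).
Implicit Type x : 'M[R]_(m, n).

Lemma mx_entry_norm_le x i j : `|x i j| <= `|x|.
Proof. by rewrite [`|x|]mx_normrE; apply: (le_bigmax _ _ (i, j)). Qed.

Lemma mx_norm_le x c : 0 <= c -> (forall i j, `|x i j| <= c) -> `|x| <= c.
Proof. by move=> c0 xc; rewrite [`|x|]mx_normrE; apply: bigmax_le => // -[i j] _. Qed.

End matrix_norm.

Lemma usubmx_norm_le (R : realType) m1 m2 n (x : 'M[R]_(m1 + m2, n)) :
  `|usubmx x| <= `|x|.
Proof. by apply: mx_norm_le => // i j; rewrite mxE; apply: mx_entry_norm_le. Qed.

Lemma dsubmx_norm_le (R : realType) m1 m2 n (x : 'M[R]_(m1 + m2, n)) :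
  `|dsubmx x| <= `|x|.
Proof. by apply: mx_norm_le => // i j; rewrite mxE; apply: mx_entry_norm_le. Qed.

Lemma dist_min_le (R : realType) (a b a' b' : R) :
  `|Num.min a b - Num.min a' b'| <= `|a - a'| + `|b - b'|.
Proof.
have := ler_norm (a - a'); have := ler_norm (a' - a).
have := ler_norm (b - b'); have := ler_norm (b' - b).
rewrite (distrC a') (distrC b').
by case: (leP a b); case: (leP a' b') => *; rewrite ler_norml; apply/andP; split; lra.
Qed.

Local Open Scope ereal_scope.

Lemma dist_mine_le (R : realType) (a b c e : \bar R) :
  c \is a fin_num -> e \is a fin_num ->
  `|mine a b - mine c e| <= `|a - c| + `|b - e|.
Proof.
case: c => // c _; case: e => // e _.
case: a => [a||]; case: b => [b||] //=; rewrite ?addey ?addye ?leey //.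
- by rewrite -!EFin_min -EFinB -EFinD lee_fin dist_min_le.
all: by rewrite -EFin_min.
Qed.

Local Close Scope ereal_scope.

Section cylinder.
Variables (R : realType) (d : nat).

Lemma Omega_continuous_measurable (f : OmegaB R d -> R) :
  Omega_continuous f -> measurable_fun setT f.
Proof.
move=> cf; apply: (measurability _ (RGenOpens.measurableE R)).
move=> _ [_ [x [y ->]] <-]; rewrite setTI; apply: sub_sigma_algebra.
move=> w /=; rewrite in_itv /= => /andP[xf fy].
have e0 : 0 < Num.min (f w - x) (y - f w) by rewrite lt_min !subr_gt0 xf fy.
have [N [del [del0 fwN]]] := cf w _ e0.
exists N, del; split => // w' /fwN; rewrite lt_min !ltr_norml.
by move=> /andP[/andP[h1 _] /andP[_ h2]]; rewrite in_itv /=; apply/andP; split; lra.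
Qed.

(* A modulus of continuity: paths within [del] on [0, max_i t i] give
   sample matrices within [del] in sup norm. *)
Lemma cylinder_continuous n (t : 'I_n -> R) (phi : 'M[R]_(n, d) -> R) L :
  (forall i, 0 <= t i) -> (forall x y, `|phi x - phi y| <= L * `|x - y|) ->
  Omega_continuous (fun w : OmegaB R d => phi (\matrix_(i < n, j < d) pval w (t i) 0 j)).
Proof.
move=> t0 Lip w eps e0; set B := fun w : Omega R d => \matrix_(i < n, j < d) pval w (t i) 0 j.
have L1_gt0 : 0 < `|L| + 1 by rewrite ltr_wpDl.
exists (\big[Num.max/0]_i t i), (eps / (`|L| + 1)); split; first by rewrite divr_gt0.
move=> w' ww'.
have dB : `|B w' - B w| <= eps / (`|L| + 1).
  apply: mx_norm_le => [|i j]; first by rewrite divr_ge0 ?ltW.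
  rewrite !mxE; apply: le_trans (ww' (t i) _); last by rewrite t0 le_bigmax.
  by have := mx_entry_norm_le (pval w' (t i) - pval w (t i)) 0 j; rewrite !mxE.
apply: le_lt_trans (Lip _ _) _.
apply: (@le_lt_trans _ _ (`|L| * (eps / (`|L| + 1)))).
  by apply: le_trans (ler_norm _) _; rewrite normrM normr_id ler_wpM2l.
by rewrite mulrA ltr_pdivrMr // mulrDr mulr1 mulrC ltrDl.
Qed.

Lemma cylinder_measurable (f : OmegaB R d -> \bar R) :
  is_cylinder f -> measurable_fun setT f.
Proof.
move=> [n [t [phi [t0 [_ [[L Lip] ->]]]]]].
have := Omega_continuous_measurable (cylinder_continuous t0 Lip).
by move/(measurable_EFinP setT).
Qed.

Lemma cylinder_fin_num (f : OmegaB R d -> \bar R) w :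
  is_cylinder f -> f w \is a fin_num.
Proof. by move=> [n [t [phi [_ [_ [_ ->]]]]]]. Qed.

(* The cylinder function of [min f g] samples at the times of [f] followed by
   those of [g]. *)
Lemma cylinder_min (f g : OmegaB R d -> \bar R) :
  is_cylinder f -> is_cylinder g -> is_cylinder (fun w => mine (f w) (g w)).
Proof.
move=> [n1 [t1 [phi1 [t10 [[M1 bd1] [[L1 Lip1] ->]]]]]].
move=> [n2 [t2 [phi2 [t20 [[M2 bd2] [[L2 Lip2] ->]]]]]].
pose t i := match fintype.split i with inl a => t1 a | inr b => t2 b end.
exists (n1 + n2)%N, t, (fun x => Num.min (phi1 (usubmx x)) (phi2 (dsubmx x))).
split; first by move=> i; rewrite /t; case: (fintype.split i).
split.
  exists (`|M1| + `|M2|) => x; have := ler_norm M1; have := ler_norm M2.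
  move: (bd1 (usubmx x)) (bd2 (dsubmx x)); rewrite !ler_norml => /andP[? ?] /andP[? ?] ? ?.
  by case: (leP (phi1 _) (phi2 _)) => _; apply/andP; split; lra.
split.
  exists (`|L1| + `|L2|) => x y; apply: le_trans (dist_min_le _ _ _ _) _.
  rewrite mulrDl; apply: lerD.
    apply: le_trans (Lip1 _ _) (le_trans (ler_wpM2r (normr_ge0 _) (ler_norm L1)) _).
    by rewrite ler_wpM2l // -linearB usubmx_norm_le.
  apply: le_trans (Lip2 _ _) (le_trans (ler_wpM2r (normr_ge0 _) (ler_norm L2)) _).
  by rewrite ler_wpM2l // -linearB dsubmx_norm_le.
apply/funext => w; rewrite -EFin_min; congr (Num.min (phi1 _) (phi2 _))%:E.
  by apply/matrixP => i j; rewrite !mxE /t (unsplitK (inl i : 'I_n1 + 'I_n2)).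
by apply/matrixP => i j; rewrite !mxE /t (unsplitK (inr i : 'I_n1 + 'I_n2)).
Qed.

End cylinder.

Local Open Scope ereal_scope.

Section upper_expectation.
Variables (R : realType) (d : nat) (Pset : set (probability (OmegaB R d) R)).
Hypothesis Pset0 : Pset !=set0.
Implicit Types (f g : OmegaB R d -> \bar R) (A : set (OmegaB R d)).

Lemma Ehat_ge0 f : (forall w, 0 <= f w) -> 0 <= Ehat Pset f.
Proof.
move=> f0; have [P PP] := Pset0; apply: le_trans (integral_ge0 _ (fun w _ => f0 w)) _.
by apply: ereal_sup_ubound; exists P.
Qed.

Lemma le_Ehat f g : (forall w, 0 <= f w) -> measurable_fun setT f ->
  measurable_fun setT g -> (forall w, f w <= g w) -> Ehat Pset f <= Ehat Pset g.
Proof.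
move=> f0 mf mg fg; apply: ge_ereal_sup => _ [P PP <-].
have : \int[P]_w g w <= Ehat Pset g by apply: ereal_sup_ubound; exists P.
by apply: le_trans; apply: ge0_le_integral.
Qed.

Lemma Ehat_add_le f g : (forall w, 0 <= f w) -> (forall w, 0 <= g w) ->
  measurable_fun setT f -> measurable_fun setT g ->
  Ehat Pset (fun w => f w + g w) <= Ehat Pset f + Ehat Pset g.
Proof.
move=> f0 g0 mf mg; apply: ge_ereal_sup => _ [P PP <-].
by rewrite ge0_integralD //; apply: leeD; apply: ereal_sup_ubound; exists P.
Qed.

Lemma cap_eq0_measure A P : Pset P -> cap Pset A = 0 -> P A = 0.
Proof.
move=> PP cA; apply/eqP; rewrite eq_le measure_ge0 andbT -cA.
by apply: ereal_sup_ubound; exists P.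
Qed.

Lemma cap_ge0 A : 0 <= cap Pset A.
Proof.
have [P PP] := Pset0; apply: le_trans (measure_ge0 P A) _.
by apply: ereal_sup_ubound; exists P.
Qed.

Lemma cap_bigcup_eq0 (A : nat -> set (OmegaB R d)) : (forall k, measurable (A k)) ->
  (forall k, cap Pset (A k) = 0) -> cap Pset (\bigcup_k A k) = 0.
Proof.
move=> mA cA; apply/eqP; rewrite eq_le cap_ge0 andbT.
apply: ge_ereal_sup => _ [P PP <-].
apply: le_trans (measure_sigma_subadditive _ _ _ _) _ => //.
  exact: bigcupT_measurable.
by rewrite eseries0 // => k _ _; exact: cap_eq0_measure (cA k).
Qed.

Lemma qsT (Pr : OmegaB R d -> Prop) : (forall w, Pr w) -> qs Pset Pr.
Proof.
move=> Prw; exists set0; split => //; split => //.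
apply/eqP; rewrite eq_le cap_ge0 andbT.
by apply: ge_ereal_sup => _ [P _ <-]; rewrite measure0.
Qed.

Lemma qs_forall (Pr : nat -> OmegaB R d -> Prop) :
  (forall k, qs Pset (Pr k)) -> qs Pset (fun w => forall k, Pr k w).
Proof.
move=> /choice[A Aqs]; exists (\bigcup_k A k); split.
  by apply: bigcupT_measurable => k; exact: (Aqs k).1.
split; first by apply: cap_bigcup_eq0 => k; [exact: (Aqs k).1 | exact: (Aqs k).2.1].
by move=> w Aw k; apply: (Aqs k).2.2 => Akw; apply: Aw; exists k.
Qed.

Lemma LL1_between f g h : LL1 Pset f -> LL1 Pset h -> measurable_fun setT g ->
  (forall w, f w <= g w <= h w) -> LL1 Pset g.
Proof.
move=> [mf Ef] [mh Eh] mg fgh; split => //.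
have mabs (k : OmegaB R d -> \bar R) :
    measurable_fun setT k -> measurable_fun setT (fun w => `|k w|).
  exact: measurableT_comp (@abse_measurable R setT).
have g_le w : `|g w| <= `|f w| + `|h w|.
  have /andP[fg gh] := fgh w; have [g0|g0] := leP 0 (g w).
    by rewrite gee0_abs // lee_paddl // (le_trans gh (lee_abs _)).
  by rewrite lte0_abs // lee_paddr // -abseN (le_trans _ (lee_abs _)) // leeN2.
apply: le_lt_trans (le_Ehat _ (mabs _ mg) (emeasurable_funD (mabs _ mf) (mabs _ mh)) g_le) _.
  by move=> w; exact: abse_ge0.
apply: le_lt_trans (Ehat_add_le _ _ (mabs _ mf) (mabs _ mh)) (lte_add_pinfty Ef Eh).
  by move=> w; exact: abse_ge0.
by move=> w; exact: abse_ge0.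
Qed.

Lemma L1G_min f g : L1G Pset f -> L1G Pset g -> L1G Pset (fun w => mine (f w) (g w)).
Proof.
move=> [mf [phi [cphi fphi]]] [mg [psi [cpsi gpsi]]].
have mdist (k k' : OmegaB R d -> \bar R) :
    measurable_fun setT k -> measurable_fun setT k' -> measurable_fun setT (fun w => `|k w - k' w|).
  by move=> mk mk'; apply: measurableT_comp (@abse_measurable R setT) _; exact: emeasurable_funB.
split; first exact: measurable_mine.
exists (fun k w => mine (phi k w) (psi k w)); split; first by move=> k; exact: cylinder_min.
apply: (@squeeze_cvge _ _ _ _ (cst 0) _
  (fun k => Ehat Pset (fun w => `|f w - phi k w|) + Ehat Pset (fun w => `|g w - psi k w|))).
- apply: nearW => k; have mphi := cylinder_measurable (cphi k).
  have mpsi := cylinder_measurable (cpsi k).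
  rewrite Ehat_ge0; last by move=> w; exact: abse_ge0.
  apply: le_trans (Ehat_add_le _ _ (mdist _ _ mf mphi) (mdist _ _ mg mpsi));
    try by move=> w; exact: abse_ge0.
  apply: le_Ehat; first by move=> w; exact: abse_ge0.
  + by apply: mdist => //; exact: measurable_mine.
  + by apply: emeasurable_funD; exact: mdist.
  + by move=> w; apply: dist_mine_le; exact: cylinder_fin_num.
- exact: cvg_cst.
- by rewrite -(adde0 0); apply: cvgeD.
Qed.

Lemma L1G_bigmin (F : nat -> OmegaB R d -> \bar R) m : (forall i, L1G Pset (F i)) ->
  L1G Pset (fun w => \big[mine/+oo]_(i < m.+1) F i w).
Proof.
move=> F_L1G; elim: m => [|m IHm].
  under eq_fun do rewrite big_ord_recl big_ord0 miney; exact: F_L1G.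
under eq_fun do rewrite big_ord_recr; exact: L1G_min.
Qed.

End upper_expectation.

Section diagonal_min.
Variables (R : realType) (u : nat -> nat -> \bar R) (x : nat -> \bar R).
Hypothesis u_decr : forall k m, u k m.+1 <= u k m.
Hypothesis u_cvg : forall k, u k m @[m --> \oo] --> x k.

Lemma bigmin_diag_decr m :
  \big[mine/+oo]_(i < m.+2) u i m.+1 <= \big[mine/+oo]_(i < m.+1) u i m.
Proof.
apply: le_bigmin => [|i _]; first exact: leey.
exact: le_trans (bigmin_le _ (widen_ord (leqnSn _) i) (fun j => u j m.+1)) (u_decr _ _).
Qed.

Lemma lim_decr_le k m : x k <= u k m.
Proof.
rewrite -(cvg_lim _ (@u_cvg k)) //; apply: lime_le; first exact: cvgP (@u_cvg k).
by exists m => // j /= mj; apply: (nonincreasing_seqP _).1 mj; exact: u_decr.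
Qed.

Lemma cvg_bigmin_diag :
  \big[mine/+oo]_(i < m.+1) u i m @[m --> \oo] --> ereal_inf (range x).
Proof.
set v := fun m => \big[mine/+oo]_(i < m.+1) u i m.
have v_decr : nonincreasing_seq v by apply/nonincreasing_seqP; exact: bigmin_diag_decr.
suff <- : ereal_inf (range v) = ereal_inf (range x) by exact: ereal_nonincreasing_cvgn.
apply/eqP; rewrite eq_le; apply/andP; split.
  apply: le_ereal_inf_tmp => _ [k _ <-]; rewrite -(cvg_lim _ (@u_cvg k)) //.
  apply: lime_ge; first exact: cvgP (@u_cvg k).
  exists k => // m /= km; apply: le_trans (ereal_inf_lbound _) _; first by exists m.
  exact: (bigmin_le _ (Ordinal (km : (k < m.+1)%N)) (fun j => u j m)).
apply: le_ereal_inf_tmp => _ [m _ <-]; apply: le_bigmin => [|i _]; first exact: leey.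
by apply: le_trans (ereal_inf_lbound _) (lim_decr_le _ _); exists i.
Qed.

End diagonal_min.

Lemma einfs_shift (R : realType) (x : nat -> \bar R) n :
  einfs x n = ereal_inf (range (fun i => x (n + i)%N)).
Proof.
congr ereal_inf; apply/seteqP; split => _ [k /= nk <-].
  by exists (k - n)%N => //; rewrite subnKC.
by exists (n + k)%N => //=; exact: leq_addr.
Qed.

Section tail_infimum.
Variables (R : realType) (d : nat) (Pset : set (probability (OmegaB R d) R)).
Hypothesis Pset0 : Pset !=set0.
Variables (X : nat -> OmegaB R d -> \bar R) (Y : OmegaB R d -> \bar R).
Hypothesis X_L1Gstar : forall k, L1Gstar Pset (X k).
Hypothesis Y_LL1 : LL1 Pset Y.
Hypothesis Y_le_X : forall k w, Y w <= X k w.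

Lemma measurable_tail_inf n : measurable_fun setT (fun w => einfs (X ^~ w) n).
Proof. by apply: measurable_fun_einfs => k; exact: (X_L1Gstar k).1.1. Qed.

Lemma LL1_tail_inf n : LL1 Pset (fun w => einfs (X ^~ w) n).
Proof.
apply: (LL1_between Y_LL1 (X_L1Gstar n).1 (measurable_tail_inf n)) => w.
apply/andP; split; first by apply: le_ereal_inf_tmp => _ [k _ <-]; exact: Y_le_X.
by apply: ereal_inf_lbound; exists n => /=.
Qed.

Lemma L1Gstar_tail_inf n : L1Gstar Pset (fun w => einfs (X ^~ w) n).
Proof.
split; first exact: LL1_tail_inf.
have /choice[V V_approx] := fun k => (X_L1Gstar k).2.
exists (fun m w => \big[mine/+oo]_(i < m.+1) V (n + i)%N m w); split.
  move=> m; apply: (L1G_bigmin Pset0 (F := fun i => V (n + i)%N m)) => i.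
  exact: (V_approx _).1.
have [A [mA [cA V_cvg]]] := qs_forall Pset0 (fun k => (V_approx k).2).
exists A; split => //; split => // w /V_cvg Vw.
have V_decr k m : V (n + k)%N m.+1 w <= V (n + k)%N m w by exact: (Vw _).1.
split; first exact: (bigmin_diag_decr (u := fun i m => V (n + i)%N m w)).
rewrite einfs_shift; apply: (cvg_bigmin_diag (u := fun i m => V (n + i)%N m w)) => // k.
exact: (Vw _).2.
Qed.

End tail_infimum.

Theorem proposition3p20 (R : realType) (d : nat)
  (Pset : set (probability (OmegaB R d) R))
  (Pne : Pset !=set0) (Pcpt : weakly_compact Pset)
  (X : nat -> OmegaB R d -> \bar R) (Y : OmegaB R d -> \bar R) :
  (forall n, L1Gstar Pset (X n)) ->
  LL1 Pset Y ->
  (forall n w, Y w <= X n w) ->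
  L1Gstarstar Pset (fun w => limn_einf (fun n => X n w)).
Proof.
move=> X_L1Gstar Y_LL1 Y_le_X.
have einfs_cvg w : einfs (X ^~ w) n @[n --> \oo] --> limn_einf (X ^~ w).
  by rewrite limn_einf_lim; exact: is_cvg_einfs.
split.
  apply: (@emeasurable_fun_cvg _ _ _ setT (fun n w => einfs (X ^~ w) n)) => [n|w _].
    exact: measurable_tail_inf.
  exact: einfs_cvg.
exists (fun n w => einfs (X ^~ w) n); split.
  exact: (L1Gstar_tail_inf Pne X_L1Gstar Y_LL1 Y_le_X).
by apply: qsT => // w; split; [move=> n; exact: nondecreasing_einfs | exact: einfs_cvg].
Qed.
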